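(* Let $\mathcal{D}(\rho)=(1-p)\rho+\frac p3(X\rho X+Y\rho Y+Z\rho Z)$ and $\mathcal{E}(\rho)=(1-q)\rho+\frac q3(X\rho X+Y\rho Y+Z\rho Z)$ be depolarizing channels with $p,q\in[0,1]$. The entanglement-assisted classical communication capacity over a quantum trajectory is $$C_{\text{E,Q}}=2+H(\alpha)+\Big(1-p-q+\tfrac{4pq}{3}\Big)\log_2\Big(1-p-q+\tfrac{4pq}{3}\Big)+(p+q-2pq)\log_2\Big(\tfrac{p+q-2pq}{3}\Big)+\tfrac{2pq}{3}\log_2\tfrac{2pq}{9},$$ where $\alpha=1-\frac{2pq}{3}$ and $H(\alpha)=-\alpha\log_2\alpha-(1-\alpha)\log_2(1-\alpha)$.
   Context: $X,Y,Z$ are Pauli matrices, $\sigma_0=I,\sigma_1=X,\sigma_2=Y,\sigma_3=Z$, $|\pm\rangle=(|0\rangle\pm|1\rangle)/\sqrt2$, $0\log_2 0=0$. For a Pauli channel $\mathcal{N}(\rho)=\sum_i r_i\sigma_i\rho\sigma_i$, the entanglement-assisted classical capacity (superdense coding, pre-shared EPR pair, equiprobable inputs) is $C_E(\mathcal{N})=2+\sum_i r_i\log_2 r_i$. Quantum trajectory: given Kraus operators $\{D_i\}$ of $\mathcal{D}$ and $\{E_j\}$ of $\mathcal{E}$ (multiples of Pauli matrices), the switched channel on data $\rho$ and control $\omega=|+\rangle\langle+|$ is $\sum_{i,j}W_{i,j}(\rho\otimes\omega)W_{i,j}^\dagger$ with $W_{i,j}=E_jD_i\otimes|0\rangle\langle0|+D_iE_j\otimes|1\rangle\langle1|$.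 Its output has the form $p_+\mathcal{S}_+(\rho)\otimes|+\rangle\langle+|+p_-\mathcal{S}_-(\rho)\otimes|-\rangle\langle-|$ (commuting Kraus pairs go to the $|+\rangle$ branch, anticommuting pairs to the $|-\rangle$ branch), with $\mathcal{S}_\pm$ normalized Pauli channels; the capacity is defined as $C_{\text{E,Q}}=p_+C_E(\mathcal{S}_+)+p_-C_E(\mathcal{S}_-)$. *)

From HB Require Import structures.
From mathcomp Require Import all_boot all_order all_algebra all_field.
From mathcomp Require Import all_classical all_reals all_analysis.
Set Implicit Arguments. Unset Strict Implicit. Unset Printing Implicit Defensive.
Import Order.TTheory GRing.Theory Num.Theory.
Local Open Scope ring_scope.

(* ---------- Pauli matrices sigma_0 = I, sigma_1 = X, sigma_2 = Y, sigma_3 = Z ---------- *)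
Definition pauli (k : 'I_4) : 'M[algC]_2 :=
  \matrix_(a < 2, b < 2)
    match val k with
    | 0%N => if a == b then 1 else 0
    | 1%N => if a != b then 1 else 0
    | 2%N => if a == b then 0 else if val a == 0%N then - 'i else 'i
    | _   => if a == b then (if val a == 0%N then 1 else -1) else 0
    end.

(* Kraus pair (D_i, E_j) = (sigma_i, sigma_j) (up to scalars) commutes *)
Definition pauli_commute (i j : 'I_4) : bool :=
  pauli i *m pauli j == pauli j *m pauli i.

(* index k such that E_j D_i = sigma_j sigma_i is a scalar multiple of sigma_k,
   i.e. sigma_k (sigma_j sigma_i) is a scalar matrix; then
   (sigma_j sigma_i) rho (sigma_j sigma_i)^dagger = sigma_k rho sigma_k. *)
Definition pauli_prod (i j : 'I_4) : 'I_4 :=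
  odflt ord0 [pick k | is_scalar_mx (pauli k *m (pauli j *m pauli i))].

(* ---------- Pauli channels: N(rho) = sum_i r_i sigma_i rho sigma_i, given by r ---------- *)
Section Cap.
Variable R : realType.

Definition log2 (x : R) : R := ln x / ln 2.

(* entanglement-assisted capacity  C_E(N) = 2 + sum_i r_i log2 r_i  (0 log 0 = 0) *)
Definition CE (r : 'I_4 -> R) : R := 2 + \sum_(i < 4) r i * log2 (r i).

Definition depolarizing (p : R) : 'I_4 -> R :=
  fun i => if i == ord0 then 1 - p else p / 3.

(* Quantum trajectory with Kraus operators D_i = sqrt(r_i) sigma_i, E_j = sqrt(s_j) sigma_j,
   control |+>: commuting pairs contribute r_i s_j sigma_k rho sigma_k (x) |+><+|,
   anticommuting pairs contribute r_i s_j sigma_k rho sigma_k (x) |-><-|, k = pauli_prod i j. *)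
Definition traj_weight (b : bool) (r s : 'I_4 -> R) : R :=
  \sum_(i < 4) \sum_(j < 4 | pauli_commute i j == b) r i * s j.

Definition traj_channel (b : bool) (r s : 'I_4 -> R) : 'I_4 -> R :=
  fun k => (\sum_(i < 4) \sum_(j < 4 | (pauli_commute i j == b) && (pauli_prod i j == k))
              r i * s j) / traj_weight b r s.

Definition CEQ (r s : 'I_4 -> R) : R :=
  traj_weight true r s * CE (traj_channel true r s)
  + traj_weight false r s * CE (traj_channel false r s).

Definition H2 (a : R) : R := - (a * log2 a) - (1 - a) * log2 (1 - a).
End Cap.

From mathcomp Require Import all_boot all_order all_algebra all_field.
From mathcomp Require Import all_classical all_reals all_analysis.
From mathcomp Require Import ring lra.
From Stdlib Require Import PeanoNat.
Import Order.TTheory GRing.Theory Num.Theory.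
Local Open Scope ring_scope.

(* Labelling X, Y, Z by the two-bit numbers 1, 2, 3, the Pauli matrices
   multiply like the Klein four-group up to a phase:
   sigma_i sigma_j = phase * sigma_(i xor j).  Hence sigma_i and sigma_j
   commute iff i = 0, j = 0 or i = j, and the switched Kraus pair (i, j) acts as
   sigma_(i xor j).  For any two Pauli channels, writing m_b(k) for the
   unnormalised weight of sigma_k in branch b (so p_b = sum_k m_b(k)),
   p_b C_E(S_b) = 2 p_b + sum_k m_b(k) log m_b(k) - p_b log p_b, and as
   p_+ + p_- = 1 this gives
   C_EQ = 2 + H(p_+) + sum_{b,k} m_b(k) log m_b(k).
   For two depolarizing channels m_+ = (1 - p - q + 4pq/3, (p + q - 2pq)/3 x 3)
   and m_- = (0, 2pq/9 x 3). *)

Lemma ord2P (i : 'I_2) : i = 0 \/ i = 1.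
Proof. by case: i => [[|[|//]] ?]; [left|right]; apply: val_inj. Qed.

Lemma mx2_eqE (R : eqType) (A B : 'M[R]_2) :
  (A == B) = [&& A 0 0 == B 0 0, A 0 1 == B 0 1, A 1 0 == B 1 0 & A 1 1 == B 1 1].
Proof.
apply/eqP/and4P => [-> | [/eqP e00 /eqP e01 /eqP e10 /eqP e11]]; first by rewrite !eqxx.
by apply/matrixP => i j; case: (ord2P i) => ->; case: (ord2P j) => ->.
Qed.

Lemma is_scalar_mx2 (R : pzRingType) (A : 'M[R]_2) :
  is_scalar_mx A = [&& A 0 1 == 0, A 1 0 == 0 & A 0 0 == A 1 1].
Proof.
apply/is_scalar_mxP/and3P => [[a ->] | [/eqP e01 /eqP e10 /eqP e11]].
  by rewrite !mxE.
exists (A 0 0); apply/matrixP => i j; rewrite !mxE.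
by case: (ord2P i) => ->; case: (ord2P j) => ->.
Qed.

Lemma is_scalar_mxZ (F : fieldType) n (c : F) (A : 'M[F]_n) :
  c != 0 -> is_scalar_mx (c *: A) = is_scalar_mx A.
Proof.
move=> c0; apply/is_scalar_mxP/is_scalar_mxP => [[a cA] | [a ->]].
  by exists (c^-1 * a); rewrite -scale_scalar_mx -cA scalerA mulVf ?scale1r.
by exists (c * a); rewrite scale_scalar_mx.
Qed.

Lemma eqr_scale2r (F : fieldType) (V : lmodType F) (v : V) (a b : F) :
  v != 0 -> (a *: v == b *: v) = (a == b).
Proof. by move=> v0; rewrite -subr_eq0 -scalerBl scaler_eq0 (negbTE v0) orbF subr_eq0. Qed.

Lemma eqrN (R : numDomainType) (x : R) : (x == - x) = (x == 0).
Proof. by rewrite eq_sym eqNr. Qed.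

Lemma mulCii (C : numClosedFieldType) : 'i * 'i = -1 :> C.
Proof. by rewrite -expr2 sqrCi. Qed.

Lemma Ci_eq0 (C : numClosedFieldType) : ('i == 0 :> C) = false.
Proof. exact/negbTE/neq0Ci. Qed.

Ltac pauli_simpl :=
  do 4 rewrite ?mxE ?big_ord_recl ?big_ord0 /= ?mul0r ?mulr0 ?mul1r ?mulr1
    ?add0r ?addr0 ?mulNr ?mulrN ?opprK ?oppr0 ?mulCii
    ?eqxx ?eqNr ?eqrN ?oppr_eq0 ?Ci_eq0 ?oner_eq0 //.

Definition pauli_xor (i j : 'I_4) : 'I_4 := inord (Nat.lxor i j).

(* XY = iZ, YZ = iX, ZX = iY *)
Definition pauli_phase (i j : 'I_4) : algC :=
  if [|| val i == 0, val j == 0 | i == j]%N then 1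
  else if val j == (i %% 3).+1 then 'i else - 'i.

Lemma pauli_xorE (i j : 'I_4) : val (pauli_xor i j) = Nat.lxor i j.
Proof.
apply: inordK.
by case: i => [[|[|[|[|//]]]] ?]; case: j => [[|[|[|[|//]]]] ?].
Qed.

Lemma pauli_mul (i j : 'I_4) :
  pauli i *m pauli j = pauli_phase i j *: pauli (pauli_xor i j).
Proof.
apply/eqP; rewrite mx2_eqE /pauli_phase /pauli pauli_xorE /Nat.lxor.
by case: i => [[|[|[|[|//]]]] ?]; case: j => [[|[|[|[|//]]]] ?]; pauli_simpl.
Qed.

Lemma pauli_phase_neq0 (i j : 'I_4) : pauli_phase i j != 0.
Proof.
by rewrite /pauli_phase; case: ifP => _; [|case: ifP => _];
  rewrite ?oppr_eq0 ?neq0Ci ?oner_eq0.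
Qed.

Lemma pauli_neq0 (k : 'I_4) : pauli k != 0.
Proof. by apply/negP; rewrite mx2_eqE /pauli; case: k => [[|[|[|[|//]]]] ?]; pauli_simpl. Qed.

Lemma is_scalar_pauli (k : 'I_4) : is_scalar_mx (pauli k) = (val k == 0)%N.
Proof. by rewrite is_scalar_mx2 /pauli; case: k => [[|[|[|[|//]]]] ?]; pauli_simpl. Qed.

Lemma pauli_xorC (i j : 'I_4) : pauli_xor i j = pauli_xor j i.
Proof. by rewrite /pauli_xor Nat.lxor_comm. Qed.

Lemma pauli_xor_eq0 (i j : 'I_4) : (val (pauli_xor i j) == 0)%N = (i == j).
Proof.
rewrite pauli_xorE; apply/eqP/eqP => [/Nat.lxor_eq | ->]; last exact: Nat.lxor_nilpotent.
exact: val_inj.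
Qed.

Lemma pauli_commuteE (i j : 'I_4) :
  pauli_commute i j = [|| val i == 0, val j == 0 | i == j]%N.
Proof.
rewrite /pauli_commute !pauli_mul pauli_xorC eqr_scale2r ?pauli_neq0 // /pauli_phase.
by case: i => [[|[|[|[|//]]]] ?]; case: j => [[|[|[|[|//]]]] ?]; pauli_simpl.
Qed.

Lemma pauli_prodE (i j : 'I_4) : pauli_prod i j = pauli_xor j i.
Proof.
have scalarE k : is_scalar_mx (pauli k *m (pauli j *m pauli i)) = (k == pauli_xor j i).
  rewrite pauli_mul -scalemxAr pauli_mul scalerA.
  by rewrite is_scalar_mxZ ?mulf_neq0 ?pauli_phase_neq0 // is_scalar_pauli pauli_xor_eq0.
rewrite /pauli_prod; case: pickP => [k | none] /=; first by rewrite scalarE => /eqP.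
by move: (none (pauli_xor j i)); rewrite scalarE eqxx.
Qed.

Section Capacity.
Context {R : realType}.

Definition traj_mass (b : bool) (r s : 'I_4 -> R) (k : 'I_4) : R :=
  \sum_(i < 4) \sum_(j < 4 | (pauli_commute i j == b) && (pauli_prod i j == k)) r i * s j.

Lemma traj_channelE b (r s : 'I_4 -> R) :
  traj_channel b r s = fun k => traj_mass b r s k / traj_weight b r s.
Proof. by []. Qed.

Lemma sum_traj_mass b (r s : 'I_4 -> R) : \sum_k traj_mass b r s k = traj_weight b r s.
Proof.
rewrite /traj_mass exchange_big; apply: eq_bigr => i _.
by rewrite [RHS](partition_big (pauli_prod i) xpredT).
Qed.

Lemma traj_mass_ge0 b (r s : 'I_4 -> R) :
  (forall i, 0 <= r i) -> (forall j, 0 <= s j) -> forall k, 0 <= traj_mass b r s k.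
Proof. by move=> r0 s0 k; do 2 apply: sumr_ge0 => ? _; apply: mulr_ge0. Qed.

Lemma traj_weightTF (r s : 'I_4 -> R) :
  traj_weight true r s + traj_weight false r s = (\sum_i r i) * (\sum_j s j).
Proof.
rewrite /traj_weight -big_split big_distrl; apply: eq_bigr => i _ /=.
rewrite big_distrr [RHS](bigID (pauli_commute i)) /=.
by congr (_ + _); apply: eq_bigl => j; case: pauli_commute.
Qed.

Lemma mulr_log2_div (x y : R) : 0 <= x -> 0 < y ->
  x * log2 (x / y) = x * log2 x - x * log2 y.
Proof.
rewrite le_eqVlt => /predU1P [<- | x0 y0]; first by rewrite !mul0r subr0.
by rewrite /log2 ln_div ?posrE // -mulrBr mulrBl.
Qed.

Lemma CE_scaled (f : 'I_4 -> R) (w : R) :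
  (forall k, 0 <= f k) -> \sum_k f k = w ->
  w * CE (fun k => f k / w) = 2 * w + \sum_k f k * log2 (f k) - w * log2 w.
Proof.
move=> f0 fw; have [w0 | w_neq0] := eqVneq w 0.
  have {}f0 k : f k = 0.
    by apply: (@psumr_eq0P _ _ xpredT f (fun k _ => f0 k)); rewrite ?fw.
  by rewrite w0 big1 => [|k _]; rewrite ?f0 ?mul0r; lra.
have w_gt0 : 0 < w by rewrite lt_def w_neq0 -fw sumr_ge0.
rewrite /CE mulrDr big_distrr /= (mulrC w 2).
under eq_bigr do rewrite mulrA (mulrC w) divfK // mulr_log2_div ?f0 //.
by rewrite sumrB -big_distrl /= fw addrA.
Qed.

Lemma CEQ_entropy (r s : 'I_4 -> R) :
  (forall i, 0 <= r i) -> (forall j, 0 <= s j) ->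
  \sum_i r i = 1 -> \sum_j s j = 1 ->
  CEQ r s = 2 + H2 (traj_weight true r s)
            + \sum_k traj_mass true r s k * log2 (traj_mass true r s k)
            + \sum_k traj_mass false r s k * log2 (traj_mass false r s k).
Proof.
move=> r0 s0 r1 s1.
have CE_mass b : traj_weight b r s * CE (traj_channel b r s) =
    2 * traj_weight b r s + \sum_k traj_mass b r s k * log2 (traj_mass b r s k)
    - traj_weight b r s * log2 (traj_weight b r s).
  rewrite traj_channelE.
  exact: CE_scaled _ _ (traj_mass_ge0 b r s r0 s0) (sum_traj_mass b r s).
have weightF : traj_weight false r s = 1 - traj_weight true r s.
  by have := traj_weightTF r s; rewrite r1 s1 mulr1; lra.
by rewrite /CEQ !CE_mass weightF /H2; ring.
Qed.

Lemma depolarizing_ge0 (p : R) : 0 <= p <= 1 -> forall i, 0 <= depolarizing p i.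
Proof.
move=> /andP [p0 p1] i; rewrite /depolarizing.
by case: ifP => _; [rewrite subr_ge0 | rewrite divr_ge0].
Qed.

Lemma sum_depolarizing (p : R) : \sum_i depolarizing p i = 1.
Proof. by rewrite !big_ord_recl big_ord0 /depolarizing /=; field. Qed.

Lemma traj_weight_depolarizing (p q : R) :
  traj_weight true (depolarizing p) (depolarizing q) = 1 - 2 * p * q / 3.
Proof.
rewrite /traj_weight; under eq_bigr do rewrite big_mkcond /=.
by rewrite !big_ord_recl !big_ord0 !pauli_commuteE /depolarizing /=; field.
Qed.

Lemma traj_mass_depolarizing (p q : R) b (k : 'I_4) :
  traj_mass b (depolarizing p) (depolarizing q) k =
  if b then (if val k == 0%N then 1 - p - q + 4 * p * q / 3 else (p + q - 2 * p * q) / 3)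
  else (if val k == 0%N then 0 else 2 * p * q / 9).
Proof.
rewrite /traj_mass; under eq_bigr do rewrite big_mkcond /=.
rewrite !big_ord_recl !big_ord0 !pauli_commuteE !pauli_prodE -!val_eqE /= !pauli_xorE.
rewrite /Nat.lxor /depolarizing /=.
by case: b; case: k => [[|[|[|[|//]]]] ?] /=; field.
Qed.

End Capacity.

Theorem corollary6 (R : realType) (p q : R) :
  0 <= p <= 1 -> 0 <= q <= 1 ->
  CEQ (depolarizing p) (depolarizing q) =
    2 + H2 (1 - 2 * p * q / 3)
    + (1 - p - q + 4 * p * q / 3) * log2 (1 - p - q + 4 * p * q / 3)
    + (p + q - 2 * p * q) * log2 ((p + q - 2 * p * q) / 3)
    + (2 * p * q / 3) * log2 (2 * p * q / 9).
Proof.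
move=> p01 q01.
have [p_ge0 q_ge0] := (depolarizing_ge0 _ p01, depolarizing_ge0 _ q01).
rewrite CEQ_entropy ?sum_depolarizing // traj_weight_depolarizing.
under eq_bigr do rewrite traj_mass_depolarizing.
under [X in _ + X]eq_bigr do rewrite traj_mass_depolarizing.
by rewrite !big_ord_recl !big_ord0 /= mul0r; field.
Qed.
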